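(* Let $G_r=(V_r,E_r)$ (virtual network) and $G_s=(V_s,E_s)$ (substrate network) be simple, connected, undirected graphs, with integer demands $d_{\bar u}$ ($\bar u\in V_r$), $d_{\bar e}$ ($\bar e\in E_r$) and integer capacities $c_u$ ($u\in V_s$), $c_e$ ($e\in E_s$). Let $(x,y)$ be the incidence vector of a feasible mapping of $G_r$ on $G_s$. Then for every virtual edge $\bar e=(\bar u,\bar v)\in E_r$ and every arc $(u,v)\in E'_s$, the flow continuity inequality $$y_{\bar e (u,v)}\le \sum_{e'\in\delta^+(v)\setminus\{(v,u)\}} y_{\bar e e'} + x_{\bar v v}$$ holds.
   Context: A mapping $m=(m_V,m_E)$ of $G_r$ on $G_s$ consists of a node placement $m_V:V_r\to V_s$ which is one-to-one (distinct virtual nodes are placed on distinct substrate nodes), and an edge routing $m_E$ assigning to each virtual edge $\bar e=\{\bar u,\bar v\}\in E_r$ a loop-free path of $G_s$ whose endpoints are $m_V(\bar u)$ and $m_V(\bar v)$. The mapping is feasible if for each $u\in V_s$ the sum of $d_{\bar u}$ over virtual nodes $\bar u$ with $m_V(\bar u)=u$ is at most $c_u$, and for each $e\in E_s$ the sum of $d_{\bar e}$ over virtual edges $\bar e$ whose routing path contains $e$ is at most $c_e$. Each virtual edge is given a fixed arbitrary orientation, written $\bar e=(\bar u,\bar v)$. Let $E'_s=\bigcup_{\{u,v\}\in E_s}\{(u,v),(v,u)\}$ be the arc set of the bidirected substrate network, and for $u\in V_s$ let $\delta^+(u)$ (resp. $\delta^-(u)$) be the set of arcs of $E'_s$ leaving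 (resp. entering) $u$. The incidence vector $(x,y)$ of a mapping $m$ has binary components $x_{\bar u u}$ ($\bar u\in V_r$, $u\in V_s$), equal to $1$ iff $m_V(\bar u)=u$, and $y_{\bar e a}$ ($\bar e\in E_r$, $a\in E'_s$), where for $\bar e=(\bar u,\bar v)$ and $a=(u,v)$, $y_{\bar e (u,v)}=1$ iff the path $m_E(\bar e)$, traversed from $m_V(\bar u)$ to $m_V(\bar v)$, uses the edge $\{u,v\}$ in the direction from $u$ to $v$. *)

From mathcomp Require Import all_boot all_order all_algebra.
Set Implicit Arguments. Unset Strict Implicit. Unset Printing Implicit Defensive.
Import Order.TTheory GRing.Theory Num.Theory.

Definition simple_graph (T : finType) (e : rel T) : Prop :=
  symmetric e /\ irreflexive e.

Definition connected_graph (T : finType) (e : rel T) : Prop :=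
  forall a b : T, connect e a b.

(* A fixed arbitrary orientation O of the edges of e: each edge {a,b}
   is represented by exactly one of the ordered pairs (a,b), (b,a). *)
Definition orientation (T : finType) (e : rel T) (O : {set T * T}) : Prop :=
  (forall a b, (a, b) \in O -> e a b) /\
  (forall a b, e a b -> ((a, b) \in O) (+) ((b, a) \in O)).

Definition arcs_of (T : eqType) (s : seq T) : seq (T * T) := zip s (behead s).

Definition loopfree_path (T : finType) (e : rel T) (a b : T) (p : seq T) : Prop :=
  [/\ path e a p, last a p = b & uniq (a :: p)].

(* A mapping (mV, mE) of (Vr, er) with oriented edges O on (Vs, es):
   mE (a,b) is the list of vertices after mV a on the routing path
   traversed from mV a to mV b. *)
Definition mapping (Vr Vs : finType) (er : rel Vr) (O : {set Vr * Vr})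
    (es : rel Vs) (mV : Vr -> Vs) (mE : Vr * Vr -> seq Vs) : Prop :=
  injective mV /\
  forall eb, eb \in O -> loopfree_path es (mV eb.1) (mV eb.2) (mE eb).

Definition uses_edge (Vr Vs : finType) (mV : Vr -> Vs) (mE : Vr * Vr -> seq Vs)
    (eb : Vr * Vr) (u v : Vs) : bool :=
  ((u, v) \in arcs_of (mV eb.1 :: mE eb)) || ((v, u) \in arcs_of (mV eb.1 :: mE eb)).

Definition feasible (Vr Vs : finType) (O : {set Vr * Vr}) (es : rel Vs)
    (dV : Vr -> int) (dE : Vr * Vr -> int) (cV : Vs -> int) (cE : {set Vs} -> int)
    (mV : Vr -> Vs) (mE : Vr * Vr -> seq Vs) : Prop :=
  (forall u : Vs, (\sum_(a | mV a == u) dV a <= cV u)%R) /\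
  (forall u v : Vs, es u v ->
     (\sum_(eb in O | uses_edge mV mE eb u v) dE eb <= cE [set u; v])%R).

Definition xinc (Vr Vs : finType) (mV : Vr -> Vs) (a : Vr) (u : Vs) : nat :=
  mV a == u.

Definition yinc (Vr Vs : finType) (mV : Vr -> Vs) (mE : Vr * Vr -> seq Vs)
    (eb : Vr * Vr) (arc : Vs * Vs) : nat :=
  arc \in arcs_of (mV eb.1 :: mE eb).

From mathcomp Require Import all_boot all_order all_algebra.

Set Implicit Arguments.
Unset Strict Implicit.

(* A loop-free routing path that enters [v] along the arc [(u, v)] either ends
   at [v] or leaves [v] along a next arc [(v, w)]; loop-freeness forbids
   [w = u], so this arc is counted on the right-hand side of the inequality. *)

Section ArcsOfPath.

Variables (T : eqType) (r : rel T).

Lemma arcs_of_cons (x y : T) (s : seq T) :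
  arcs_of [:: x, y & s] = (x, y) :: arcs_of (y :: s).
Proof. by []. Qed.

Lemma arcs_of_path (x : T) (s : seq T) (a b : T) :
  path r x s -> (a, b) \in arcs_of (x :: s) -> r a b.
Proof.
elim: s x => [|y s IHs] x //= /andP[rxy ps].
rewrite arcs_of_cons in_cons => /orP[/eqP[-> ->] // | ab_in].
exact: IHs ps ab_in.
Qed.

Lemma uniq_arcs_of_next (x : T) (s : seq T) (u v : T) :
  uniq (x :: s) -> (u, v) \in arcs_of (x :: s) ->
  v = last x s \/ exists2 w, w != u & (v, w) \in arcs_of (x :: s).
Proof.
elim: s x => [|y s IHs] x //= /andP[x_notin uniq_ys].
rewrite arcs_of_cons in_cons => /orP[/eqP[-> ->] | uv_in].
  case: s x_notin {IHs uniq_ys} => [|z s] x_notin /=; first by left.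
  right; exists z; last by rewrite !arcs_of_cons !inE eqxx orbT.
  by apply: contraNneq x_notin => ->; rewrite !inE eqxx orbT.
have [-> | [w w_neq_u vw_in]] := IHs y uniq_ys uv_in; first by left.
by right; exists w; rewrite // in_cons vw_in orbT.
Qed.

End ArcsOfPath.

Lemma loopfree_path_arc_next (T : finType) (r : rel T) (a b u v : T) (p : seq T) :
  loopfree_path r a b p -> (u, v) \in arcs_of (a :: p) ->
  v = b \/ exists w, [/\ r v w, w != u & (v, w) \in arcs_of (a :: p)].
Proof.
case=> path_p <- uniq_p /(uniq_arcs_of_next uniq_p) [-> | [w w_neq_u vw_in]].
  by left.
by right; exists w; split=> //; apply: arcs_of_path path_p vw_in.
Qed.

Theorem proposition2
  (Vr Vs : finType) (er : rel Vr) (es : rel Vs) (O : {set Vr * Vr})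
  (dV : Vr -> int) (dE : Vr * Vr -> int) (cV : Vs -> int) (cE : {set Vs} -> int)
  (mV : Vr -> Vs) (mE : Vr * Vr -> seq Vs) :
  simple_graph er -> connected_graph er ->
  simple_graph es -> connected_graph es ->
  orientation er O ->
  mapping er O es mV mE ->
  feasible O es dV dE cV cE mV mE ->
  forall (eb : Vr * Vr), eb \in O ->
  forall u v : Vs, es u v ->
    (yinc mV mE eb (u, v) <=
       \sum_(w : Vs | es v w && (w != u)) yinc mV mE eb (v, w) + xinc mV eb.2 v)%N.
Proof.
move=> _ _ _ _ _ [_ routed] _ eb eb_in u v _.
rewrite /yinc /xinc.
have [uv_in | //] := boolP ((u, v) \in _).
have [-> | [w [es_vw w_neq_u vw_in]]] :=
  loopfree_path_arc_next (routed eb eb_in) uv_in.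
  by rewrite eqxx addn1.
by rewrite (bigD1 w) /= ?es_vw ?w_neq_u // vw_in.
Qed.
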